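(* Let $n\ge1$ and for $a_0,\dots,a_n\in[0,1]$ and $p\in[0,1]$ put $$D(a_0,\dots,a_n;p)=\sum_{k=0}^n\binom{n}{k}p^k(1-p)^{n-k}|p-a_k|.$$ Suppose $(a_0,\dots,a_n)\in[0,1]^{n+1}$ minimizes $\max_{p\in[0,1]}D(x_0,\dots,x_n;p)$ over all $(x_0,\dots,x_n)\in[0,1]^{n+1}$, and let $f(p)=D(a_0,\dots,a_n;p)$ and $M(f)=\{x\in[0,1]: f(x)=\max_{[0,1]}f\}$. Then $a_0<a_1<\cdots<a_n$, and $M(f)\cap(a_i,a_{i+1})\neq\emptyset$ for every $i=0,\dots,n-1$. *)

From HB Require Import structures.
From mathcomp Require Import all_boot all_order all_algebra.
From mathcomp Require Import all_classical all_reals.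
Set Implicit Arguments. Unset Strict Implicit. Unset Printing Implicit Defensive.
Import Order.TTheory GRing.Theory Num.Theory.
Local Open Scope ring_scope.
Local Open Scope classical_set_scope.

Definition Dfun (R : realType) (n : nat) (a : nat -> R) (p : R) : R :=
  \sum_(k < n.+1) ('C(n, k))%:R * p ^+ k * (1 - p) ^+ (n - k) * `|p - a k|.

(* max over p in [0,1] of D(a; p) (the sup is attained by continuity) *)
Definition Dmax (R : realType) (n : nat) (a : nat -> R) : R :=
  sup [set Dfun n a p | p in [set p : R | 0 <= p <= 1]].

Definition in_cube (R : realType) (n : nat) (a : nat -> R) : Prop :=
  forall k, (k <= n)%N -> 0 <= a k <= 1.

(* Fix a minimizer a and an index i < n, and suppose f = D(a; .) has no maximum point in
   (a_i, a_{i+1}) (as is the case when a_i >= a_{i+1}).  Moving a_i down and a_{i+1} up (plus small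
   moves of a_0 and a_n for the maximum points 0 and 1) gives a direction h with
   D(a + t h; p) = f(p) - t S(p) for small t > 0, where S(p) = sum_k B_k(p) sg(p - a_k) h_k > 0
   at every maximum point p.  This needs p <> a_k: an interior node is never a maximum point,
   since near a_k the function f is a polynomial plus a positive multiple of |p - a_k|.
   Since D is convex in a and [0, 1] is compact, the pointwise decrease becomes
   max D(a + t h) < max D(a) for small t > 0, contradicting minimality. *)

From HB Require Import structures.
From mathcomp Require Import all_boot all_order all_algebra.
From mathcomp Require Import all_classical all_reals all_analysis.
From mathcomp Require Import ring lra.
Set Implicit Arguments.
Unset Strict Implicit.
Unset Printing Implicit Defensive.
Import Order.TTheory GRing.Theory Num.Theory.
Import numFieldNormedType.Exports.
Local Open Scope ring_scope.
Local Open Scope classical_set_scope.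

Section Preliminaries.
Variable R : realType.

Lemma near0_scale_lt (c e : R) : 0 < e -> \forall t \near 0^'+, `|t * c| < e.
Proof.
move=> e_gt0; near=> t.
have t_gt0 : 0 < t by near: t; exact: nbhs_right_gt.
have : t * (`|c| + 1) < e.
  rewrite -ltr_pdivlMr ?ltr_wpDl //; near: t.
  by apply: nbhs_right_lt; rewrite divr_gt0 ?ltr_wpDl.
by rewrite normrM gtr0_norm //; nra.
Unshelve. all: by end_near.
Qed.

Lemma near0_convex_descent (g : R -> R -> R) (m : R) :
  (forall t, continuous (g t)) ->
  (forall l t y, 0 <= l <= 1 -> 0 <= y <= 1 ->
     g (l * t) y <= (1 - l) * g 0 y + l * g t y) ->
  (forall y, 0 <= y <= 1 -> g 0 y <= m) ->
  (forall y, 0 <= y <= 1 -> exists2 t, 0 < t & g t y < m) ->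
  \forall s \near 0^'+, forall y, 0 <= y <= 1 -> g s y < m.
Proof.
move=> g_cont g_convex g0_le descent.
have : \forall s \near 0^'+, `[0, 1] `<=` (fun y => g s y < m).
  move/compact_near_coveringP/near_covering_withinP : (@segment_compact R 0 1).
  apply=> x; rewrite /= in_itv /= => x01.
  have [t t_gt0 gtx_lt] := descent x x01.
  have near_x : \forall y \near x, g t y < m by exact: (cvgr_lt _ (g_cont t x)).
  near=> y s => /=; rewrite in_itv /= => y01.
  have s_gt0 : 0 < s by near: s; exact: nbhs_right_gt.
  have s_lt : s < t by near: s; exact: nbhs_right_lt.
  have l01 : 0 <= s / t <= 1.
    by apply/andP; split; [rewrite divr_ge0 // ltW | rewrite ler_pdivrMr // mul1r ltW].
  have := g_convex (s / t) t y l01 y01; rewrite mulfVK ?gt_eqF //.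
  have : (1 - s / t) * g 0 y <= (1 - s / t) * m.
    by rewrite ler_wpM2l ?g0_le // subr_ge0; case/andP: l01.
  have : s / t * g t y < s / t * m by rewrite ltr_pM2l ?divr_gt0 //; near: y.
  lra.
apply: filter_app; near=> s => sub y y01; apply: sub; rewrite /= in_itv /= y01.
Unshelve. all: by end_near.
Qed.

Lemma normrD_lt (d e : R) : `|e| < `|d| -> `|d + e| = `|d| + Num.sg d * e.
Proof.
move=> lt_ed; have /andP[lo hi] : - `|d| < e < `|d| by rewrite -ltr_norml.
case: (ltrgtP d 0) => [d_lt0|d_gt0|d0].
- rewrite ltr0_sg // ltr0_norm // in lo hi *; rewrite ltr0_norm; [ring | lra].
- rewrite gtr0_sg // gtr0_norm // in lo hi *; rewrite gtr0_norm; [ring | lra].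
- by move: lt_ed; rewrite d0 normr0 ltNge normr_ge0.
Qed.

Lemma sg_combination_ge (p u v : R) : 0 <= p <= 1 -> p != u -> p != v -> ~ (u < p < v) ->
  (1 - p) * `|p - u| + p * `|p - v| <=
  - (Num.sg (p - u) * u * (1 - p)) + Num.sg (p - v) * (1 - v) * p.
Proof.
move=> /andP[p_ge0 p_le1] pu pv out; rewrite -subr_ge0.
rewrite (_ : _ - _ = p * (1 - p) * (Num.sg (p - v) - Num.sg (p - u))); last first.
  by rewrite !normrEsg; ring.
rewrite mulr_ge0 ?mulr_ge0 ?subr_ge0 //.
have [lt_up|le_pu] := ltrP u p.
  have lt_vp : v < p.
    by rewrite lt_neqAle eq_sym pv leNgt /=; apply/negP => lt_pv; apply: out; rewrite lt_up.
  by rewrite !gtr0_sg ?subr_gt0.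
rewrite ltr0_sg ?subr_lt0 ?lt_neqAle ?pu //.
case: (ltrgtP p v) => [lt_pv|lt_vp|/eqP]; last by rewrite (negPf pv).
  by rewrite ltr0_sg ?subr_lt0.
by rewrite gtr0_sg ?subr_gt0 // lerN10.
Qed.

Lemma poly_kink_not_max (f : R -> R) (G K : {poly R}) (c : R) :
  0 < c < 1 -> 0 < K.[c] -> f c = G.[c] ->
  (forall q, 0 <= q <= 1 -> G.[q] + K.[q] * `|q - c| <= f q) ->
  exists2 q, 0 <= q <= 1 & f c < f q.
Proof.
move=> /andP[c_gt0 c_lt1] Kc_gt0 fc f_ge.
have [Q GE] : exists Q : {poly R}, G = Q * ('X - c%:P) + G.[c]%:P.
  have /factor_theorem[Q eQ] : root (G - G.[c]%:P) c by rewrite rootE !hornerE subrr.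
  by exists Q; rewrite -eQ subrK.
(* Step to the side of c where the linear part Q.[c] * (q - c) of G is nonnegative. *)
pose side : R := if 0 <= Q.[c] then 1 else -1.
have sideQ : 0 < side * Q.[c] + K.[c].
  rewrite /side; case: ifPn => [Q_ge0|]; first by rewrite mul1r ltr_wpDl.
  by rewrite -ltNge mulN1r => Q_lt0; rewrite ltr_wpDl // oppr_ge0 ltW.
have : \forall q \near c, 0 < (side *: Q + K).[q].
  by apply: (cvgr_gt _ (@continuous_horner _ _ c)); rewrite !hornerE.
move/nbhs_ballP => [r /= r_gt0 near_c].
near (0 : R)^'+ => e.
have e_gt0 : 0 < e by near: e; exact: nbhs_right_gt.
have e_lt_r : e < r by near: e; exact: nbhs_right_lt.
have e_lt_c : e < c by near: e; exact: nbhs_right_lt.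
have e_lt_1c : e < 1 - c by near: e; apply: nbhs_right_lt; rewrite subr_gt0.
have side_pm : side = 1 \/ side = -1 by rewrite /side; case: ifP; [left|right].
have side_e : `|side * e| = e.
  by rewrite normrM (gtr0_norm e_gt0); case: side_pm => ->; rewrite ?normrN ger0_norm ?mul1r.
have q01 : 0 <= c + side * e <= 1.
  by apply/andP; case: side_pm => ->; split; lra.
set q := c + side * e in q01 *.
have qc : q - c = side * e by rewrite addrC addKr.
exists q => //.
have : 0 < (side *: Q + K).[q].
  by apply: near_c; rewrite -ball_normE /ball_ /= distrC qc side_e.
rewrite fc !hornerE => pos; apply: lt_le_trans (f_ge _ q01).
rewrite GE !hornerE subrr mulr0 add0r qc side_e.
rewrite (_ : _ + _ + _ = G.[c] + e * (side * Q.[q] + K.[q])); last by ring.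
by rewrite ltrDl mulr_gt0.
Unshelve. all: by end_near.
Qed.

End Preliminaries.

Section Bernstein.
Variables (R : realType) (n : nat).
Implicit Types (k : nat) (p : R).

Definition bernstein k p : R := 'C(n, k)%:R * p ^+ k * (1 - p) ^+ (n - k).

Definition bernstein_poly k : {poly R} := 'C(n, k)%:R *: ('X ^+ k * (1 - 'X) ^+ (n - k)).

Lemma horner_bernstein k p : (bernstein_poly k).[p] = bernstein k p.
Proof. by rewrite hornerZ !hornerE. Qed.

Lemma bernstein_ge0 k p : 0 <= p <= 1 -> 0 <= bernstein k p.
Proof.
by case/andP=> p_ge0 p_le1; rewrite !mulr_ge0 ?exprn_ge0 ?subr_ge0.
Qed.

Lemma bernstein_gt0 k p : (k <= n)%N -> 0 < p < 1 -> 0 < bernstein k p.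
Proof.
by move=> kn /andP[p_gt0 p_lt1]; rewrite !mulr_gt0 ?exprn_gt0 ?subr_gt0 ?ltr0n ?bin_gt0.
Qed.

Lemma sum_bernstein p : \sum_(k < n.+1) bernstein k p = 1.
Proof.
rewrite -(expr1n _ n) -{1}(subrK p 1) exprDn.
by apply: eq_bigr => k _; rewrite /bernstein -mulr_natl; ring.
Qed.

Lemma bernstein_le1 (k : 'I_n.+1) p : 0 <= p <= 1 -> bernstein k p <= 1.
Proof.
move=> p01; rewrite -(sum_bernstein p) (bigD1 k) //= lerDl.
by apply: sumr_ge0 => j _; exact: bernstein_ge0.
Qed.

Lemma bernstein_at0 k : bernstein k 0 = (k == 0)%N%:R.
Proof.
by case: k => [|k]; rewrite /bernstein ?bin0 expr0n /= ?subr0 expr1n ?mulr1 ?mulr0 ?mul0r.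
Qed.

Lemma bernstein_at1 k : bernstein k 1 = (k == n)%:R.
Proof.
rewrite /bernstein subrr expr1n mulr1 expr0n; case: (ltngtP k n) => [kn|nk|->].
- by rewrite subn_eq0 leqNgt kn mulr0.
- by rewrite bin_small // mul0r.
- by rewrite binn subnn mulr1.
Qed.

End Bernstein.

Section Dfun.
Variables (R : realType) (n : nat).
Implicit Types (a b h : nat -> R) (p : R).

Lemma DfunE a p : Dfun n a p = \sum_(k < n.+1) bernstein n k p * `|p - a k|.
Proof. by []. Qed.

Lemma Dfun_ge_term a k p : (k <= n)%N -> 0 <= p <= 1 ->
  bernstein n k p * `|p - a k| <= Dfun n a p.
Proof.
move=> kn p01; rewrite DfunE (bigD1 (Ordinal (kn : (k < n.+1)%N))) //= lerDl.
by apply: sumr_ge0 => j _; rewrite mulr_ge0 ?bernstein_ge0.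
Qed.

Lemma Dfun_at0 a : Dfun n a 0 = `|a 0%N|.
Proof.
rewrite DfunE big_ord_recl big1 => [|k _]; last by rewrite bernstein_at0 mul0r.
by rewrite bernstein_at0 mul1r addr0 sub0r normrN.
Qed.

Lemma Dfun_at1 a : Dfun n a 1 = `|1 - a n|.
Proof.
rewrite DfunE big_ord_recr big1 /= => [|k _]; last first.
  by rewrite bernstein_at1 ltn_eqF ?mul0r.
by rewrite bernstein_at1 eqxx mul1r add0r.
Qed.

Lemma Dfun_continuous a : continuous (Dfun n a).
Proof.
move=> p; apply: cvg_big; first exact: add_continuous.
move=> k _; apply: cvgM; last by apply: cvg_norm; apply: cvgB; [exact: cvg_id | exact: cvg_cst].
apply: cvgM; last first.
  apply: (@cvg_comp _ _ _ (fun q => 1 - q) (fun q => q ^+ (n - k))); last exact: exprn_continuous.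
  by apply: cvgB; [exact: cvg_cst | exact: cvg_id].
by apply: cvgM; [exact: cvg_cst | exact: exprn_continuous].
Qed.

Lemma Dfun_convex a b l p : 0 <= l <= 1 -> 0 <= p <= 1 ->
  Dfun n (fun k => (1 - l) * a k + l * b k) p <= (1 - l) * Dfun n a p + l * Dfun n b p.
Proof.
move=> /andP[l_ge0 l_le1] p01; rewrite !DfunE !mulr_sumr -big_split /=.
apply: ler_sum => k _; rewrite [(1 - l) * (_ * _)]mulrCA [l * (_ * _)]mulrCA -mulrDr.
rewrite ler_wpM2l ?bernstein_ge0 //.
rewrite (_ : p - _ = (1 - l) * (p - a k) + l * (p - b k)); last by ring.
by apply: le_trans (ler_normD _ _) _; rewrite !normrM (ger0_norm l_ge0) ger0_norm ?subr_ge0.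
Qed.

Lemma Dfun_le_add a b p : 0 <= p <= 1 ->
  Dfun n a p <= Dfun n b p + \sum_(k < n.+1) `|a k - b k|.
Proof.
move=> p01; rewrite !DfunE -big_split /=; apply: ler_sum => k _.
have B_ge0 := @bernstein_ge0 R n k p p01; have B_le1 := @bernstein_le1 R n k p p01.
have : `|p - a k| <= `|p - b k| + `|a k - b k|.
  by rewrite (_ : p - a k = (p - b k) - (a k - b k)); [exact: ler_normB | ring].
move=> le_ab; apply: le_trans (ler_wpM2l B_ge0 le_ab) _.
by rewrite mulrDr lerD2l ler_piMl.
Qed.

Lemma Dmax_attained a : exists c, [/\ 0 <= c <= 1, Dfun n a c = Dmax n a &
  forall p, 0 <= p <= 1 -> Dfun n a p <= Dmax n a].
Proof.
have [c c01 c_max] := EVT_max ler01 (continuous_subspaceT (@Dfun_continuous a)).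
have {}c_max p : 0 <= p <= 1 -> Dfun n a p <= Dfun n a c.
  by move=> p01; apply: c_max; rewrite in_itv.
move: c01; rewrite in_itv /= => c01.
have image_ne0 : [set Dfun n a p | p in [set p | 0 <= p <= 1]] !=set0.
  by exists (Dfun n a 0), 0; rewrite //= lexx ler01.
have c_ub : ubound [set Dfun n a p | p in [set p | 0 <= p <= 1]] (Dfun n a c).
  by move=> _ [p p01 <-]; exact: c_max.
have c_Dmax : Dfun n a c = Dmax n a.
  apply/le_anti/andP; split; last exact: ge_sup.
  apply: sup_upper_bound; first by split; last exists (Dfun n a c).
  by exists c.
by exists c; split => // p p01; rewrite -c_Dmax c_max.
Qed.

Lemma Dfun_le_Dmax a p : 0 <= p <= 1 -> Dfun n a p <= Dmax n a.
Proof. by have [c [_ _]] := Dmax_attained a; apply. Qed.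

Lemma Dmax_gt0 a : 0 < Dmax n a.
Proof.
have [a0|a0_ne0] := eqVneq (a 0%N) 0; last first.
  have : Dfun n a 0 <= Dmax n a by apply: Dfun_le_Dmax; rewrite lexx ler01.
  by rewrite Dfun_at0; apply: lt_le_trans; rewrite normr_gt0.
have half01 : 0 <= (2^-1 : R) <= 1 by apply/andP; split; lra.
apply: lt_le_trans (Dfun_le_Dmax a half01); apply: lt_le_trans (Dfun_ge_term a (leq0n n) half01).
rewrite a0 subr0 mulr_gt0 ?normr_gt0 ?bernstein_gt0 //.
by apply/andP; split; lra.
Qed.

Lemma Dfun_node_not_max a k : (k <= n)%N -> 0 < a k < 1 ->
  exists2 q, 0 <= q <= 1 & Dfun n a (a k) < Dfun n a q.
Proof.
move=> kn ak01; set c := a k.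
(* Freezing the sign of p - a j at c bounds D from below, with equality at c. *)
pose side j := if a j == c then 0 else Num.sg (c - a j).
pose G := \sum_(j < n.+1) side j *: (bernstein_poly R n j * ('X - (a j)%:P)).
pose K := \sum_(j < n.+1) (a j == c)%:R *: bernstein_poly R n j.
have hornerG q : G.[q] = \sum_(j < n.+1) side j * (bernstein n j q * (q - a j)).
  rewrite horner_sum; apply: eq_bigr => j _.
  by rewrite hornerZ hornerM hornerXsubC horner_bernstein.
have hornerK q : K.[q] = \sum_(j < n.+1) (a j == c)%:R * bernstein n j q.
  by rewrite horner_sum; apply: eq_bigr => j _; rewrite hornerZ horner_bernstein.
apply: (poly_kink_not_max (G := G) (K := K)) => //.
- rewrite hornerK (bigD1 (Ordinal (kn : (k < n.+1)%N))) //= eqxx mul1r.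
  apply: lt_le_trans (bernstein_gt0 kn ak01) _; rewrite lerDl.
  apply: sumr_ge0 => j _; rewrite mulr_ge0 ?bernstein_ge0 //.
  by case/andP: ak01 => *; rewrite !ltW.
- rewrite DfunE hornerG; apply: eq_bigr => j _; rewrite /side.
  case: eqP => [->|_]; first by rewrite subrr normr0 mulr0 mul0r.
  by rewrite normrEsg; ring.
- move=> q q01; rewrite hornerG hornerK mulr_suml -big_split DfunE /=.
  apply: ler_sum => j _; rewrite /side; case: eqP => [->|_]; first by rewrite mul0r add0r mul1r.
  rewrite mulr0n !mul0r addr0 mulrCA ler_wpM2l ?bernstein_ge0 //.
  by apply: le_trans (ler_norm _) _; rewrite normrM normr_sg; case: (_ != 0); rewrite ?mul1r ?mul0r.
Qed.

Lemma Dmax_point_not_node a k p : (k <= n)%N -> 0 <= p <= 1 ->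
  Dfun n a p = Dmax n a -> p = a k -> bernstein n k p = 0.
Proof.
move=> kn /andP[p_ge0 p_le1] p_max pk.
have [p0|p_ne0] := eqVneq p 0.
  rewrite p0 bernstein_at0; case: eqP => [k0|_] //.
  by have := Dmax_gt0 a; rewrite -p_max p0 Dfun_at0 -k0 -pk p0 normr0 ltxx.
have [p1|p_ne1] := eqVneq p 1.
  rewrite p1 bernstein_at1; case: eqP => [kn'|_] //.
  by have := Dmax_gt0 a; rewrite -p_max p1 Dfun_at1 -kn' -pk p1 subrr normr0 ltxx.
have ak01 : 0 < a k < 1 by rewrite -pk !lt_def p_ne0 p_ge0 eq_sym p_ne1.
have [q q01] := Dfun_node_not_max kn ak01.
by rewrite -pk p_max ltNge Dfun_le_Dmax.
Qed.

(* The factor p (1 - p) leaves room for nodes at 0 or 1. *)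
Lemma Dmax_point_away a k : (k <= n)%N -> 0 <= a k <= 1 ->
  exists2 e, 0 < e & forall p, 0 <= p <= 1 -> Dfun n a p = Dmax n a ->
    e * (p * (1 - p)) <= `|p - a k|.
Proof.
move=> kn /andP[ak_ge0 ak_le1].
have [->|ak_ne0] := eqVneq (a k) 0.
  by exists 1 => // p /andP[p_ge0 p_le1] _; rewrite subr0 ger0_norm //; nra.
have [->|ak_ne1] := eqVneq (a k) 1.
  by exists 1 => // p /andP[p_ge0 p_le1] _; rewrite distrC ger0_norm ?subr_ge0 //; nra.
have ak01 : 0 < a k < 1 by rewrite !lt_def ak_ne0 ak_ge0 eq_sym ak_ne1.
have [q q01 lt_q] := Dfun_node_not_max kn ak01.
have : \forall x \near a k, Dfun n a x < Dmax n a.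
  exact: cvgr_lt (@Dfun_continuous a (a k)) _ (lt_le_trans lt_q (Dfun_le_Dmax a q01)).
move/nbhs_ballP => [r /= r_gt0 below]; exists r => // p /andP[p_ge0 p_le1] p_max.
have : r <= `|p - a k|.
  rewrite leNgt distrC; apply/negP => near_ak.
  by have := below p; rewrite -ball_normE /= p_max ltxx => /(_ near_ak).
nra.
Qed.

Lemma Dmax_points_away a : in_cube n a ->
  exists2 eps, 0 < eps & forall k p, (k <= n)%N -> 0 <= p <= 1 -> Dfun n a p = Dmax n a ->
    eps * (p * (1 - p)) <= `|p - a k|.
Proof.
move=> a01.
have away (k : 'I_n.+1) : \forall eps \near 0^'+, forall p, 0 <= p <= 1 ->
    Dfun n a p = Dmax n a -> eps * (p * (1 - p)) <= `|p - a k|.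
  have [e e_gt0 e_away] := Dmax_point_away (ltn_ord k) (a01 k (ltn_ord k)).
  near=> eps => p /[dup] p01 /andP[p_ge0 p_le1] p_max; apply: le_trans (e_away p p01 p_max).
  rewrite ler_wpM2r ?mulr_ge0 ?subr_ge0 //; apply: ltW; near: eps; exact: nbhs_right_lt.
have [eps [/= eps_gt0 all_away]] := filter_ex (filterI (nbhs_right_gt 0) (filter_forall _ away)).
by exists eps => // k p kn; exact: (all_away (Ordinal (kn : (k < n.+1)%N))).
Unshelve. all: by end_near.
Qed.

Definition Dslope a h p := \sum_(k < n.+1) bernstein n k p * (Num.sg (p - a k) * h k).

Lemma Dfun_first_order a h p : (forall k, (k <= n)%N -> p = a k -> bernstein n k p = 0) ->
  \forall t \near 0^'+, Dfun n (fun k => a k + t * h k) p = Dfun n a p - t * Dslope a h p.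
Proof.
move=> nodes.
have term (k : 'I_n.+1) : \forall t \near 0^'+, bernstein n k p * `|p - (a k + t * h k)| =
    bernstein n k p * `|p - a k| - t * (bernstein n k p * (Num.sg (p - a k) * h k)).
  have [pk|pk] := eqVneq p (a k).
    by near=> t; rewrite (nodes k (ltn_ord k) pk) !mul0r mulr0 subr0.
  have d_gt0 : 0 < `|p - a k| by rewrite normr_gt0 subr_eq0.
  near=> t; rewrite (_ : p - _ = (p - a k) + - (t * h k)); last by ring.
  rewrite normrD_lt; first by ring.
  by rewrite normrN; near: t; exact: near0_scale_lt _ d_gt0.
apply: (filterS _ (filter_forall _ term)) => t /= terms.
by rewrite !DfunE /Dslope mulr_sumr -sumrB; apply: eq_bigr => k _; exact: terms.
Unshelve. all: by end_near.
Qed.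

Lemma Dfun_shift_lt a h y m : 0 <= y <= 1 -> Dfun n a y < m ->
  \forall t \near 0^'+, Dfun n (fun k => a k + t * h k) y < m.
Proof.
move=> y01 lt_m; have gap_gt0 : 0 < m - Dfun n a y by rewrite subr_gt0.
near=> t.
have t_gt0 : 0 < t by near: t; exact: nbhs_right_gt.
have small : `|t * \sum_(k < n.+1) `|h k| | < m - Dfun n a y.
  by near: t; exact: near0_scale_lt _ gap_gt0.
apply: le_lt_trans (Dfun_le_add _ a y01) _.
under eq_bigr do rewrite addrAC subrr add0r normrM (gtr0_norm t_gt0).
by rewrite -mulr_sumr -ltrBrDl; apply: le_lt_trans small; exact: ler_norm.
Unshelve. all: by end_near.
Qed.

Lemma minimizer_no_descent a h :
  (forall x, in_cube n x -> Dmax n a <= Dmax n x) ->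
  (\forall t \near 0^'+, in_cube n (fun k => a k + t * h k)) ->
  (forall p, 0 <= p <= 1 -> Dfun n a p = Dmax n a ->
     \forall t \near 0^'+, Dfun n (fun k => a k + t * h k) p < Dmax n a) ->
  False.
Proof.
move=> amin feasible descent.
pose g t := Dfun n (fun k => a k + t * h k).
have g0 : g 0 = Dfun n a by rewrite /g; congr Dfun; apply/funext => k; rewrite mul0r addr0.
have below : \forall s \near 0^'+, forall y, 0 <= y <= 1 -> g s y < Dmax n a.
  apply: near0_convex_descent => [t|l t y l01 y01|y y01|y y01].
  - exact: Dfun_continuous.
  - rewrite g0 /g (_ : (fun k => _) = (fun k => (1 - l) * a k + l * (a k + t * h k))).
      exact: Dfun_convex.
    by apply/funext => k; ring.
  - by rewrite g0; exact: Dfun_le_Dmax.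
  have : \forall t \near 0^'+, g t y < Dmax n a.
    have [y_max|y_nmax] := eqVneq (Dfun n a y) (Dmax n a); first exact: descent.
    by apply: Dfun_shift_lt; rewrite // lt_def eq_sym y_nmax Dfun_le_Dmax.
  by move=> /(filterI (nbhs_right_gt 0))/filter_ex[t [/= t_gt0 lt_t]]; exists t.
near (0 : R)^'+ => s.
have below_s : forall y, 0 <= y <= 1 -> g s y < Dmax n a by near: s.
have : Dmax n a <= Dmax n (fun k => a k + s * h k) by apply: amin; near: s.
have [c [c01 <- _]] := Dmax_attained (fun k => a k + s * h k).
by rewrite leNgt below_s.
Unshelve. all: by end_near.
Qed.

Lemma in_cube_near a h (al be : nat -> R) : in_cube n a ->
  (forall k, (k <= n)%N -> [/\ 0 <= al k, 0 <= be k & h k = be k * (1 - a k) - al k * a k]) ->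
  \forall t \near 0^'+, in_cube n (fun k => a k + t * h k).
Proof.
move=> a01 inward.
have coord (k : 'I_n.+1) : \forall t \near 0^'+, 0 <= a k + t * h k <= 1.
  have [al_ge0 be_ge0 ->] := inward k (ltn_ord k).
  have /andP[ak_ge0 ak_le1] := a01 k (ltn_ord k).
  near=> t.
  have t_gt0 : 0 < t by near: t; exact: nbhs_right_gt.
  have t_al : `|t * al k| < 1 by near: t; exact: near0_scale_lt.
  have t_be : `|t * be k| < 1 by near: t; exact: near0_scale_lt.
  rewrite !ger0_norm ?mulr_ge0 // ?ltW // in t_al t_be.
  rewrite (_ : a k + _ = a k * (1 - t * al k) + t * be k * (1 - a k)); last by ring.
  have : t * be k * (1 - a k) <= 1 - a k by apply: ler_piMl; [rewrite subr_ge0 | exact: ltW].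
  have : a k * (1 - t * al k) <= a k by apply: ler_piMr; rewrite // gerBl mulr_ge0 // ltW.
  have : 0 <= a k * (1 - t * al k) + t * be k * (1 - a k).
    by rewrite addr_ge0 // mulr_ge0 // ?mulr_ge0 // ?subr_ge0 // ltW.
  by move=> *; apply/andP; split; lra.
apply: (filterS _ (filter_forall _ coord)) => t /= coords k kn.
exact: (coords (Ordinal (kn : (k < n.+1)%N))).
Unshelve. all: by end_near.
Qed.

Definition two_point (j1 j2 : nat) (f1 f2 : nat -> R) (k : nat) : R :=
  (if k == j1 then f1 k else 0) + (if k == j2 then f2 k else 0).

Lemma Dslope_linear a h1 h2 c p :
  Dslope a (fun k => h1 k + c * h2 k) p = Dslope a h1 p + c * Dslope a h2 p.
Proof. by rewrite /Dslope mulr_sumr -big_split /=; apply: eq_bigr => k _; ring. Qed.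

Lemma Dslope_two_point a j1 j2 f1 f2 p : (j1 <= n)%N -> (j2 <= n)%N ->
  Dslope a (two_point j1 j2 f1 f2) p =
  bernstein n j1 p * (Num.sg (p - a j1) * f1 j1) + bernstein n j2 p * (Num.sg (p - a j2) * f2 j2).
Proof.
have point j (f : nat -> R) : (j <= n)%N -> \sum_(k < n.+1)
    bernstein n k p * (Num.sg (p - a k) * (if (k : nat) == j then f k else 0)) =
    bernstein n j p * (Num.sg (p - a j) * f j).
  move=> jn; rewrite (bigD1 (Ordinal (jn : (j < n.+1)%N))) //= eqxx big1 ?addr0 // => k.
  by rewrite -val_eqE /= => /negPf ->; rewrite !mulr0.
move=> j1n j2n; rewrite /Dslope /two_point -(point j1 f1 j1n) -(point j2 f2 j2n) -big_split /=.
by apply: eq_bigr => k _; rewrite -!mulrDr.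
Qed.

Lemma Dslope_at0 a h : Dslope a h 0 = Num.sg (- a 0%N) * h 0%N.
Proof.
rewrite /Dslope big_ord_recl big1 => [|k _]; last by rewrite bernstein_at0 mul0r.
by rewrite bernstein_at0 mul1r addr0 sub0r.
Qed.

Lemma Dslope_at1 a h : Dslope a h 1 = Num.sg (1 - a n) * h n.
Proof.
rewrite /Dslope big_ord_recr big1 /= => [|k _]; last by rewrite bernstein_at1 ltn_eqF ?mul0r.
by rewrite bernstein_at1 eqxx mul1r add0r.
Qed.

Lemma gap_terms_ge i u v p eps : (i < n)%N -> 0 < p < 1 -> 0 < eps -> ~ (u < p < v) ->
  eps * (p * (1 - p)) <= `|p - u| -> eps * (p * (1 - p)) <= `|p - v| ->
  eps * (p ^+ i.+1 * (1 - p) ^+ (n - i)) <=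
  bernstein n i p * (Num.sg (p - u) * - ((n - i)%:R * u)) +
  bernstein n i.+1 p * (Num.sg (p - v) * (i.+1%:R * (1 - v))).
Proof.
move=> lt_in /andP[p_gt0 p_lt1] eps_gt0 out eu ev.
have w_gt0 : 0 < eps * (p * (1 - p)) by rewrite !mulr_gt0 ?subr_gt0.
have pu : p != u by apply/eqP => pu; move: eu; rewrite -pu subrr normr0 leNgt w_gt0.
have pv : p != v by apply/eqP => pv; move: ev; rewrite -pv subrr normr0 leNgt w_gt0.
have p01 : 0 <= p <= 1 by rewrite !ltW.
have := sg_combination_ge p01 pu pv out.
set Q := - _ + _ => Q_ge.
set Y := p ^+ i * (1 - p) ^+ (n - i.+1).
have Y_ge0 : 0 <= Y by rewrite mulr_ge0 ?exprn_ge0 ?subr_ge0 ?ltW.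
have binE : 'C(n, i.+1)%:R * i.+1%:R = 'C(n, i)%:R * (n - i)%:R :> R.
  by rewrite -!natrM mulnC mul_bin_left mulnC.
have N_ge1 : 1 <= 'C(n, i)%:R * (n - i)%:R :> R.
  by rewrite -natrM ler1n muln_gt0 bin_gt0 subn_gt0 lt_in (ltnW lt_in).
have -> : p ^+ i.+1 * (1 - p) ^+ (n - i) = Y * (p * (1 - p)).
  by rewrite /Y -(subnSK lt_in) !exprS; ring.
have -> : bernstein n i p * (Num.sg (p - u) * - ((n - i)%:R * u)) +
    bernstein n i.+1 p * (Num.sg (p - v) * (i.+1%:R * (1 - v))) =
    Y * ('C(n, i)%:R * (n - i)%:R * (- (Num.sg (p - u) * u * (1 - p))) +
         'C(n, i.+1)%:R * i.+1%:R * (Num.sg (p - v) * (1 - v) * p)).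
  by rewrite /Y /bernstein -(subnSK lt_in) !exprS; ring.
rewrite binE -mulrDr -/Q mulrCA ler_wpM2l //.
have w_le_Q : eps * (p * (1 - p)) <= Q.
  apply: le_trans Q_ge.
  rewrite [leLHS](_ : _ = (1 - p) * (eps * (p * (1 - p))) + p * (eps * (p * (1 - p)))).
    by apply: lerD; apply: ler_wpM2l => //; rewrite ?subr_ge0 ltW.
  by ring.
have Q_ge0 := le_trans (ltW w_gt0) w_le_Q.
by apply: le_trans w_le_Q _; rewrite -[leLHS]mul1r ler_wpM2r.
Qed.

Lemma end_terms_ge i u v p : (i < n)%N -> 0 <= u <= 1 -> 0 <= v <= 1 -> 0 <= p <= 1 ->
  - (2 * (p ^+ i.+1 * (1 - p) ^+ (n - i))) <=
  bernstein n 0 p * (Num.sg (p - u) * - u ^+ i.+1) +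
  bernstein n n p * (Num.sg (p - v) * (1 - v) ^+ (n - i)).
Proof.
move=> lt_in /andP[u_ge0 u_le1] /andP[v_ge0 v_le1] /andP[p_ge0 p_le1].
set X := p ^+ i.+1 * (1 - p) ^+ (n - i).
have X_ge0 : 0 <= X by rewrite mulr_ge0 ?exprn_ge0 ?subr_ge0.
have -> : bernstein n 0 p = (1 - p) ^+ n by rewrite /bernstein bin0 expr0 !mul1r subn0.
have -> : bernstein n n p = p ^+ n by rewrite /bernstein binn subnn expr0 mulr1 mul1r.
suff [left right] : - X <= (1 - p) ^+ n * (Num.sg (p - u) * - u ^+ i.+1) /\
                   - X <= p ^+ n * (Num.sg (p - v) * (1 - v) ^+ (n - i)) by lra.
split.
- have [le_pu|lt_up] := lerP p u.
    apply: le_trans (_ : 0 <= _); first by rewrite oppr_le0.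
    by rewrite mulr_ge0 ?exprn_ge0 ?subr_ge0 // mulr_le0 ?sgr_le0 ?subr_le0 // oppr_le0 exprn_ge0.
  rewrite gtr0_sg ?subr_gt0 // mul1r mulrN lerN2 /X mulrC.
  rewrite ler_pM ?exprn_ge0 ?subr_ge0 //; first by rewrite lerXn2r ?nnegrE // ltW.
  by rewrite ler_wiXn2l ?subr_ge0 ?gerBl ?leq_subr.
- have [le_vp|lt_pv] := lerP v p.
    apply: le_trans (_ : 0 <= _); first by rewrite oppr_le0.
    by rewrite mulr_ge0 ?exprn_ge0 ?subr_ge0 // mulr_ge0 ?sgr_ge0 ?subr_ge0 // exprn_ge0 ?subr_ge0.
  rewrite ltr0_sg ?subr_lt0 // mulN1r mulrN lerN2 /X.
  rewrite ler_pM ?exprn_ge0 ?subr_ge0 //; first by rewrite ler_wiXn2l.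
  by rewrite lerXn2r ?nnegrE ?subr_ge0 // lerB // ltW.
Qed.

End Dfun.

Section GapDirection.
Variables (R : realType) (n : nat) (a : nat -> R) (i : nat) (del : R).
Hypotheses (n_gt0 : (0 < n)%N) (lt_in : (i < n)%N) (a01 : in_cube n a) (del_gt0 : 0 < del).

(* The weights make the first-order contributions of a_i and a_{i+1} share the factor
   C(n, i) (n - i) p^i (1 - p)^(n - i - 1); the del-terms at a_0 and a_n take care of the
   maximum points 0 and 1. *)
Definition gap_weight_down k : R :=
  (if k == i then (n - i)%:R else 0) + (if k == 0%N then del * a k ^+ i else 0).

Definition gap_weight_up k : R :=
  (if k == i.+1 then i.+1%:R else 0) + (if k == n then del * (1 - a k) ^+ (n - i.+1) else 0).

Definition gap_dir k : R := gap_weight_up k * (1 - a k) - gap_weight_down k * a k.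

Lemma gap_dirE : gap_dir = fun k =>
  two_point i i.+1 (fun k => - ((n - i)%:R * a k)) (fun k => i.+1%:R * (1 - a k)) k +
  del * two_point 0 n (fun k => - a k ^+ i.+1) (fun k => (1 - a k) ^+ (n - i)) k.
Proof.
apply/funext => k; rewrite /gap_dir /gap_weight_up /gap_weight_down /two_point.
rewrite -(subnSK lt_in) !exprS.
by case: (k == i); case: (k == i.+1); case: (k == 0%N); case: (k == n); ring.
Qed.

Lemma gap_dir_feasible : \forall t \near 0^'+, in_cube n (fun k => a k + t * gap_dir k).
Proof.
apply: (in_cube_near (al := gap_weight_down) (be := gap_weight_up)) => // k kn.
have /andP[ak_ge0 ak_le1] := a01 kn.
by split; rewrite /gap_weight_down /gap_weight_up ?addr_ge0 //; case: ifP => _;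
  rewrite ?ler0n ?mulr_ge0 ?exprn_ge0 ?subr_ge0 ?(ltW del_gt0).
Qed.

Lemma Dslope_gap_dir_at0 : 0 < a 0%N -> 0 < Dslope n a gap_dir 0.
Proof.
move=> a0_gt0; rewrite Dslope_at0 ltr0_sg ?oppr_lt0 // mulN1r oppr_gt0.
rewrite /gap_dir /gap_weight_up /gap_weight_down /= eq_sym (gtn_eqF n_gt0).
rewrite addr0 mul0r sub0r oppr_lt0 mulr_gt0 // ltr_wpDl ?mulr_gt0 ?exprn_gt0 //.
by case: ifP; rewrite ?ler0n.
Qed.

Lemma Dslope_gap_dir_at1 : a n < 1 -> 0 < Dslope n a gap_dir 1.
Proof.
move=> an_lt1; rewrite Dslope_at1 gtr0_sg ?subr_gt0 // mul1r.
rewrite /gap_dir /gap_weight_up /gap_weight_down eqxx (gtn_eqF lt_in) (gtn_eqF n_gt0).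
rewrite add0r mul0r subr0 mulr_gt0 ?subr_gt0 // ltr_wpDl ?mulr_gt0 ?exprn_gt0 ?subr_gt0 //.
by case: ifP; rewrite ?ler0n.
Qed.

Lemma Dslope_gap_dir_gt0 p eps : 0 < p < 1 -> ~ (a i < p < a i.+1) -> 0 < eps -> 2 * del < eps ->
  eps * (p * (1 - p)) <= `|p - a i| -> eps * (p * (1 - p)) <= `|p - a i.+1| ->
  0 < Dslope n a gap_dir p.
Proof.
move=> p01 out eps_gt0 del_lt away_i away_i1.
have inner := gap_terms_ge lt_in p01 eps_gt0 out away_i away_i1.
have p01' : 0 <= p <= 1 by case/andP: p01 => *; rewrite !ltW.
have outer := end_terms_ge lt_in (a01 (leq0n n)) (a01 (leqnn n)) p01'.
have X_gt0 : 0 < p ^+ i.+1 * (1 - p) ^+ (n - i).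
  by case/andP: p01 => *; rewrite mulr_gt0 ?exprn_gt0 ?subr_gt0.
rewrite gap_dirE Dslope_linear !Dslope_two_point ?(ltnW lt_in) //.
move: (ler_wpM2l (ltW del_gt0) outer) inner; nra.
Qed.

End GapDirection.

Lemma minimizer_gap (R : realType) (n : nat) (a : nat -> R) i : (0 < n)%N -> in_cube n a ->
  (forall x, in_cube n x -> Dmax n a <= Dmax n x) -> (i < n)%N ->
  exists x, [/\ 0 <= x <= 1, Dfun n a x = Dmax n a & a i < x < a i.+1].
Proof.
move=> n_gt0 a01 amin lt_in; apply: contrapT => nogap.
have [eps eps_gt0 away] := Dmax_points_away a01.
have del_gt0 : 0 < eps / 4 by rewrite divr_gt0.
apply: (minimizer_no_descent amin (gap_dir_feasible i a01 del_gt0)).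
move=> p p01 p_max.
have slope_gt0 : 0 < Dslope n a (gap_dir n a i (eps / 4)) p.
  have [p0|p_ne0] := eqVneq p 0.
    rewrite p0 Dslope_gap_dir_at0 // lt_def (andP (a01 _ (leq0n n))).1 andbT -normr_gt0.
    by rewrite -(Dfun_at0 n) -[X in Dfun _ _ X]p0 p_max Dmax_gt0.
  have [p1|p_ne1] := eqVneq p 1.
    rewrite p1 Dslope_gap_dir_at1 // lt_def (andP (a01 _ (leqnn n))).2 andbT -subr_eq0.
    by rewrite -normr_gt0 -(Dfun_at1 n) -[X in Dfun _ _ X]p1 p_max Dmax_gt0.
  have /andP[p_ge0 p_le1] := p01.
  have p01' : 0 < p < 1 by rewrite !lt_def p_ne0 p_ge0 eq_sym p_ne1.
  apply: (Dslope_gap_dir_gt0 lt_in a01 del_gt0 p01' _ eps_gt0).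
  - by move=> in_gap; apply: nogap; exists p.
  - lra.
  - exact: away (ltnW lt_in) p01 p_max.
  - exact: away lt_in p01 p_max.
have nodes k kn : p = a k -> bernstein n k p = 0 := Dmax_point_not_node kn p01 p_max.
have first_order := Dfun_first_order (gap_dir n a i (eps / 4)) nodes.
apply: (filterS _ (filterI (nbhs_right_gt 0) first_order)) => t /= [t_gt0 ->].
by rewrite p_max gtrBl mulr_gt0.
Qed.

Theorem theorem2p2 (R : realType) (n : nat) (a : nat -> R) :
  (1 <= n)%N ->
  in_cube n a ->
  (forall x : nat -> R, in_cube n x -> Dmax n a <= Dmax n x) ->
  (forall i, (i < n)%N -> a i < a i.+1) /\
  (forall i, (i < n)%N ->
     exists x : R, [/\ 0 <= x <= 1, Dfun n a x = Dmax n a & a i < x < a i.+1]).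
Proof.
move=> n_gt0 a01 amin.
have gap i (lt_in : (i < n)%N) := minimizer_gap n_gt0 a01 amin lt_in.
by split=> // i /gap[x [_ _ /andP[lt_ai_x lt_x_ai1]]]; exact: lt_trans lt_x_ai1.
Qed.
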